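(* For every graph $G$, $1\le \operatorname{zir}(G)\le \operatorname{Z}(G)\le \overline{\operatorname{Z}}(G)\le \operatorname{ZIR}(G)$.
   Context: Graphs are simple, finite, undirected, with nonempty vertex set. Zero forcing: a blue vertex $u$ changes a white vertex $w$ to blue if $w$ is the only white neighbor of $u$; $B$ is a zero forcing set if starting from blue set $B$ eventually all vertices are blue. $\operatorname{Z}(G)$ is the minimum cardinality of a zero forcing set; $\overline{\operatorname{Z}}(G)$ is the maximum cardinality of a minimal (under inclusion) zero forcing set. A nonempty $F\subseteq V(G)$ is a fort if every $v\notin F$ satisfies $|N(v)\cap F|\ne1$. For $S\subseteq V(G)$, $x\in S$, a private fort of $x$ relative to $S$ is a fort $F$ with $S\cap F=\{x\}$. $S$ is a ZIr-set if every element of $S$ has a private fort relative to $S$. $\operatorname{zir}(G)$ (resp. $\operatorname{ZIR}(G)$) is the minimum (resp. maximum) cardinality of a maximal (under inclusion) ZIr-set of $G$. *)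

(* A simple graph is a finite type T of vertices with an
   irreflexive symmetric adjacency relation e. *)
From mathcomp Require Import all_boot.
Set Implicit Arguments. Unset Strict Implicit. Unset Printing Implicit Defensive.

Section ZeroForcing.
Variables (T : finType) (e : rel T).

Definition nbhd (v : T) : {set T} := [set u | e v u].

Definition zf_step (B : {set T}) : {set T} :=
  B :|: [set w | [exists u in B, e u w && [forall v, (e u v && (v != w)) ==> (v \in B)]]].

(* final colouring; #|T| rounds suffice since each productive round adds a vertex *)
Definition zf_closure (B : {set T}) : {set T} := iter #|T| zf_step B.

Definition zero_forcing_set (B : {set T}) : bool := zf_closure B == setT.

(* Z(G): minimum cardinality of a zero forcing set (V(G) is one, so #|T| is a
   valid neutral element) *)
Definition Zf : nat :=
  \big[minn/#|T|]_(B : {set T} | zero_forcing_set B) #|B|.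

Definition Zbar : nat :=
  \max_(B : {set T} | minset zero_forcing_set B) #|B|.

Definition fort (F : {set T}) : bool :=
  (F != set0) && [forall v, (v \notin F) ==> (#|nbhd v :&: F| != 1)].

Definition private_fort (S : {set T}) (x : T) (F : {set T}) : bool :=
  fort F && (S :&: F == [set x]).

Definition ZIr_set (S : {set T}) : bool :=
  [forall x in S, exists F : {set T}, private_fort S x F].

(* zir(G): min cardinality of an inclusion-maximal ZIr-set (they exist since
   set0 is a ZIr-set, and have size <= #|T|) *)
Definition zir : nat :=
  \big[minn/#|T|]_(S : {set T} | maxset ZIr_set S) #|S|.

Definition ZIR : nat :=
  \max_(S : {set T} | maxset ZIr_set S) #|S|.

End ZeroForcing.

(* Zero forcing is dual to forts: a set is zero forcing iff it meets every fort,
   because forcing never enters a fort avoided by the blue set, while the white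
   vertices left at the end of a stalled forcing process form a fort.  So in a
   minimal zero forcing set B each x has a fort meeting B only in x, i.e. B is a
   ZIr-set, and it is maximal because each fort of a larger set S must already
   meet B. *)
From HB Require Import structures.
From mathcomp Require Import all_boot.
Set Implicit Arguments. Unset Strict Implicit. Unset Printing Implicit Defensive.

HB.instance Definition _ := SemiGroup.isComLaw.Build nat minn minnA minnC.

Lemma bigmin_leq (I : finType) (P : pred I) (F : I -> nat) x i :
  P i -> \big[minn/x]_(j | P j) F j <= F i.
Proof. by move=> Pi; rewrite (bigD1 i) //= geq_minl. Qed.

Section ExtensiveIteration.
Variables (T : finType) (f : {set T} -> {set T}).
Implicit Type A : {set T}.
Hypothesis f_ext : forall A, A \subset f A.

Lemma sub_iter_ext k A : A \subset iter k f A.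
Proof. by elim: k => [|k IHk] /=; [exact: subxx | exact: subset_trans IHk (f_ext _)]. Qed.

Lemma iter_ext_fixed_or_large k A :
  f (iter k f A) = iter k f A \/ k <= #|iter k f A|.
Proof.
elim: k => [|k [fixk | largek]]; [by right | by left; rewrite /= fixk |].
set X := iter k f A; have [fixX | growX] := eqVneq (f X) X.
  by left; rewrite /= -/X fixX.
right; apply: leq_ltn_trans largek (proper_card _).
by rewrite properEneq eq_sym growX f_ext.
Qed.

Lemma iter_card_ext_fixed A : f (iter #|T| f A) = iter #|T| f A.
Proof.
have [//|large] := iter_ext_fixed_or_large #|T| A.
have -> : iter #|T| f A = setT by apply/eqP; rewrite eqEcard subsetT cardsT.
by apply/eqP; rewrite eqEsubset subsetT f_ext.
Qed.

End ExtensiveIteration.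

Section ForcingAndForts.
Variables (T : finType) (e : rel T).
Implicit Types (B F S : {set T}) (x : T).

Lemma zf_step_ext B : B \subset zf_step e B.
Proof. exact: subsetUl. Qed.

Lemma sub_zf_closure B : B \subset zf_closure e B.
Proof. exact/sub_iter_ext/zf_step_ext. Qed.

Lemma zf_step_closure B : zf_step e (zf_closure e B) = zf_closure e B.
Proof. exact/iter_card_ext_fixed/zf_step_ext. Qed.

Lemma fort_disjoint_zf_step B F :
  fort e F -> [disjoint B & F] -> [disjoint zf_step e B & F].
Proof.
move=> /andP[_ /forallP fortF] dBF; rewrite disjoints_subset; apply/subsetP => w.
rewrite !inE => /orP[wB | ]; first by rewrite (disjointFr dBF wB).
move=> /existsP[u /andP[uB /andP[euw /forallP onlyw]]]; apply/negP => wF.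
have NuF : nbhd e u :&: F = [set w].
  apply/setP => v; rewrite !inE; have [-> | nvw] := eqVneq v w; first by rewrite euw wF.
  apply/negbTE/andP => -[euv vF].
  by move: (onlyw v); rewrite euv nvw => /(disjointFr dBF); rewrite vF.
by move: (fortF u); rewrite (disjointFr dBF uB) NuF cards1.
Qed.

Lemma fort_disjoint_zf_closure B F :
  fort e F -> [disjoint B & F] -> [disjoint zf_closure e B & F].
Proof.
move=> fortF; rewrite /zf_closure; elim: #|T| => [//|k IHk] /= dBF.
exact/fort_disjoint_zf_step/IHk.
Qed.

Lemma fort_compl_zf_closure B :
  ~~ zero_forcing_set e B -> fort e (~: zf_closure e B).
Proof.
set C := zf_closure e B => notZFS; apply/andP; split.
  by rewrite -setCT (inj_eq (@setC_inj _)).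
apply/forallP => v; apply/implyP; rewrite inE negbK => vC.
apply/negP => /cards1P[w NvC].
have : w \in nbhd e v :&: ~: C by rewrite NvC inE.
rewrite !inE => /andP[evw]; apply/negP/negPn.
rewrite /C -zf_step_closure -/C inE; apply/orP; right; rewrite inE.
apply/existsP; exists v; rewrite vC evw /=.
apply/forallP => u; apply/implyP => /andP[evu nuw]; apply: contraNT nuw => uC.
have : u \in nbhd e v :&: ~: C by rewrite !inE evu uC.
by rewrite NvC inE.
Qed.

Lemma zero_forcingP B :
  reflect (forall F, fort e F -> ~~ [disjoint B & F]) (zero_forcing_set e B).
Proof.
apply: (iffP idP) => [/eqP ZFS F fortF | meets_forts].
  apply/negP => /(fort_disjoint_zf_closure fortF).
  by rewrite ZFS -setI_eq0 setTI; apply/negP; case/andP: fortF.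
apply: contraT => /fort_compl_zf_closure fortC.
by have := meets_forts _ fortC; rewrite disjoints_subset setCK sub_zf_closure.
Qed.

Lemma minset_zero_forcing_private_fort B x :
  minset (zero_forcing_set e) B -> x \in B -> exists F, private_fort e B x F.
Proof.
move=> /minsetP[ZFS minB] xB.
have notZFS : ~~ zero_forcing_set e (B :\ x).
  apply/negP => /minB/(_ (subD1set B x))/setP/(_ x).
  by rewrite !inE eqxx xB.
set F := ~: zf_closure e (B :\ x).
have fortF : fort e F := fort_compl_zf_closure notZFS.
have dF : [disjoint B :\ x & F] by rewrite disjoints_subset setCK sub_zf_closure.
have BF_sub1 : B :&: F \subset [set x].
  apply/subsetP => y /setIP[yB yF]; apply/set1P/eqP/negPn/negP => nyx.
  by move: yF; rewrite (disjointFr dF) // !inE nyx yB.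
exists F; rewrite /private_fort fortF /=.
move: BF_sub1; rewrite subset1 => /orP[// | BF0].
by have := zero_forcingP _ ZFS F fortF; rewrite -setI_eq0 BF0.
Qed.

Lemma minset_zero_forcing_maxset_ZIr B :
  minset (zero_forcing_set e) B -> maxset (ZIr_set e) B.
Proof.
move=> minB; have ZFS := minsetp minB; apply/maxsetP; split.
  apply/forallP => x; apply/implyP => xB; apply/existsP.
  exact: minset_zero_forcing_private_fort.
move=> S /forallP ZIrS BS; apply/eqP; rewrite eqEsubset BS andbT.
apply/subsetP => y yS; have /existsP[F /andP[fortF /eqP SF]] := implyP (ZIrS y) yS.
have /set0Pn[z /setIP[zB zF]] : B :&: F != set0.
  by rewrite setI_eq0; exact: (zero_forcingP _ ZFS).
have : z \in S :&: F by rewrite inE (subsetP BS _ zB) zF.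
by rewrite SF => /set1P <-.
Qed.

Lemma zero_forcing_setT : zero_forcing_set e setT.
Proof. by rewrite /zero_forcing_set eqEsubset subsetT sub_zf_closure. Qed.

Lemma ZIr_set1 x : ZIr_set e [set x].
Proof.
apply/forallP => y; apply/implyP => /set1P ->; apply/existsP; exists setT.
rewrite /private_fort setIT eqxx andbT; apply/andP; split.
  by apply/set0Pn; exists x; rewrite inE.
by apply/forallP => v; rewrite inE.
Qed.

Lemma maxset_ZIr_neq0 S x : maxset (ZIr_set e) S -> S != set0.
Proof.
move=> maxS; apply/eqP => S0.
have := maxsetsup maxS (ZIr_set1 x); rewrite S0 sub0set => /(_ isT)/setP/(_ x).
by rewrite !inE eqxx.
Qed.

Lemma zir_leq_zero_forcing B : zero_forcing_set e B -> zir e <= #|B|.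
Proof.
move=> /minset_exists[B' minB' subB]; apply: leq_trans (subset_leq_card subB).
exact/bigmin_leq/minset_zero_forcing_maxset_ZIr.
Qed.

End ForcingAndForts.

Theorem corollary2p3 (T : finType) (e : rel T) :
  symmetric e -> irreflexive e -> 0 < #|T| ->
  [/\ 1 <= zir e, zir e <= Zf e, Zf e <= Zbar e & Zbar e <= ZIR e].
Proof.
move=> _ _ T_gt0; have /card_gt0P[x _] := T_gt0.
have [B0 minB0 _] := minset_exists (zero_forcing_setT e).
split.
- apply: (big_ind (leq 1)) => // [m n | S /(maxset_ZIr_neq0 x)].
    by rewrite leq_min => -> ->.
  by rewrite card_gt0.
- apply: (big_ind (leq (zir e))) => // [|m n|]; last exact: zir_leq_zero_forcing.
    by rewrite -cardsT; exact/zir_leq_zero_forcing/zero_forcing_setT.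
  by rewrite leq_min => -> ->.
- apply: leq_trans (bigmin_leq _ _ (minsetp minB0)) _.
  exact: leq_bigmax_cond.
- apply/bigmax_leqP => B minB.
  exact/leq_bigmax_cond/minset_zero_forcing_maxset_ZIr.
Qed.
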